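(* Consider $n$ processes running the Median-based Byzantine Agreement algorithm (described in the context) with any parameter $\alpha$ satisfying $0 \le \alpha < \lceil n/6 \rceil - 1$, in a system in which fewer than $\lfloor n/3 \rfloor$ processes are Byzantine. Then the algorithm satisfies consistency: all non-faulty processes output the same value.
   Context: System model: $n$ processes $p_1,\dots,p_n$ communicate over a complete network in fully synchronous rounds (every message sent in a round is delivered before the next round); the receiver of a message knows its sender. A Byzantine (faulty) process may deviate arbitrarily from the protocol, e.g. send different messages to different processes or omit messages; the other processes are non-faulty. Each process $p_i$ has an input value $v_i$ from a totally ordered domain $V$ (integers); $\bot \notin V$ is a special default value. WeakMVBA: a Byzantine agreement protocol (tolerating the given number of Byzantine processes) in which each process has an input and all non-faulty processes terminate with: (consistency) the same decision value; (weak validity) if all non-faulty processes have the same input $v$, the decision is $v$; otherwise the decision is some value of $V\cup\{\bot\}$. Median-based Byzantine Agreement algorithm with parameter $\alpha$, run by a process with input $v$: (1) send $v$ to all processes (including itself); initialize an array $A[1..n]$ to $\bot$ and set $A[i]$ to the value received from $p_i$. (2) For each $i=1,\dots,n$, in parallel, run an instance of WeakMVBA in which this process uses input $A[i]$, and replace $A[i]$ by the decision of that instance. (3) Output select\_value$(A)$, defined as: delete all $\bot$ entries of $A$ to obtain a list $A_{\not\bot}$ of length $k$; let $C[u]$ be the number of occurrences of $u$ in $A_{\not\bot}$ and let $m$ be a value maximizing $C[m]$ (ties broken by a fixed deterministic rule); if $C[m] \ge \lfloor k/3\rfloor + 1 + \alpha$, output $m$; otherwise sort $A_{\not\bot}$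 in nondecreasing order and output its median element (the entry at position $\lfloor k/2 \rfloor$; for even $k$ the lower of the two middle values). *)

From mathcomp Require Import all_boot all_order all_algebra.
Set Implicit Arguments. Unset Strict Implicit. Unset Printing Implicit Defensive.
Import Order.TTheory GRing.Theory Num.Theory.

(* Values: V = int; the default value bot is None (option int). *)

Definition is_mode_rule (mode : seq int -> int) : Prop :=
  forall s : seq int, s != [::] ->
    mode s \in s /\ (forall u : int, count_mem u s <= count_mem (mode s) s)%N.

(* The median is the entry at 0-based index (k-1)/2 of the sorted list
   (the middle value for odd k, the lower middle value for even k);
   for k = 0 the result is bot. *)
Definition select_value (mode : seq int -> int) (alpha : nat)
    (A : seq (option int)) : option int :=
  let L := pmap id A in
  let k := size L in
  let m := mode L in
  if (k %/ 3 + 1 + alpha <= count_mem m L)%N then Some m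
  else nth None (map Some (sort (fun x y : int => (x <= y)%R) L)) (k.-1 %/ 2).

Definition weak_mvba_spec (n : nat) (F : {set 'I_n})
    (inp dec : 'I_n -> option int) : Prop :=
  (forall i i', i \notin F -> i' \notin F -> dec i = dec i') /\
  (* weak validity (the alternative case "some value of V u {bot}" is
     automatic since dec i : option int) *)
  (forall v : int, (forall i, i \notin F -> inp i = Some v) ->
     forall i, i \notin F -> dec i = Some v).

(* Output of process i in the median-based algorithm, given its decided
   array dec i j (decision of process i in instance j). *)
Definition mba_output (n : nat) (mode : seq int -> int) (alpha : nat)
    (dec : 'I_n -> 'I_n -> option int) (i : 'I_n) : option int :=
  select_value mode alpha [seq dec i j | j <- enum 'I_n].

From mathcomp Require Import all_boot all_order all_algebra.

Lemma weak_mvba_decisions_agree (n : nat) (F : {set 'I_n})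
    (inp dec : 'I_n -> option int) (i i' : 'I_n) :
  weak_mvba_spec F inp dec -> i \notin F -> i' \notin F -> dec i = dec i'.
Proof. by move=> [consistent _]; apply: consistent. Qed.

Lemma mba_output_eq (n : nat) (mode : seq int -> int) (alpha : nat)
    (dec : 'I_n -> 'I_n -> option int) (i i' : 'I_n) :
  dec i =1 dec i' -> mba_output mode alpha dec i = mba_output mode alpha dec i'.
Proof. by move=> same_array; rewrite /mba_output (eq_map same_array). Qed.

(* recv i j is the value non-faulty process i received from p_j in step 1
   (None = bot), dec i j its decision in the j-th WeakMVBA instance. *)
(* Consistency only uses the consistency of each WeakMVBA instance; the bounds
   on alpha and #|F| and the tie-breaking rule matter for validity, not here. *)
Theorem lemma1 (n : nat) (alpha : nat) (mode : seq int -> int)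
    (F : {set 'I_n}) (v : 'I_n -> int)
    (recv : 'I_n -> 'I_n -> option int)
    (dec : 'I_n -> 'I_n -> option int) :
  is_mode_rule mode ->
  (alpha.+1 < (n + 5) %/ 6)%N ->
  (#|F| < n %/ 3)%N ->
  (forall i j, i \notin F -> j \notin F -> recv i j = Some (v j)) ->
  (forall j, weak_mvba_spec F (fun i => recv i j) (fun i => dec i j)) ->
  forall i i', i \notin F -> i' \notin F ->
    mba_output mode alpha dec i = mba_output mode alpha dec i'.
Proof.
move=> _ _ _ _ instance_spec i i' nf_i nf_i'.
apply: mba_output_eq => j.
exact: weak_mvba_decisions_agree (instance_spec j) nf_i nf_i'.
Qed.
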